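(* Let $\Sigma$ be a shift space, $Y$ an irreducible shift of finite type, and $\phi : \Sigma \to Y$ a right closing open code. Then $\Sigma$ is a nonwandering shift of finite type.
   Context: Shift spaces are closed shift-invariant subsets of $\mathcal{A}^{\mathbb{Z}}$; a code is a continuous shift-commuting map; open: images of open sets are open. Irreducible: for all words $u,v$ there is $w$ with $uwv$ a word. Nonwandering: for every word $u$ there is $w$ with $uwu$ a word. Right closing: $\phi$ never identifies two distinct left asymptotic points, where $x,\bar x$ are left asymptotic if $d(\sigma^{-n}x,\sigma^{-n}\bar x)\to0$, $d(x,\bar x)=2^{-k}$ with $k$ maximal such that $x_{[-k,k]}=\bar x_{[-k,k]}$. *)

From Stdlib Require Import ZArith List.
Import ListNotations.
Open Scope Z_scope.

Definition finite_alphabet (A : Type) : Prop := exists l : list A, forall a, In a l.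

Definition shift {A : Type} (x : Z -> A) : Z -> A := fun i => x (i + 1).

(* x and y agree on the window [-k,k], i.e. d(x,y) <= 2^-k (or x = y). *)
Definition agree_on {A : Type} (k : Z) (x y : Z -> A) : Prop :=
  forall i, -k <= i <= k -> x i = y i.

Definition block {A : Type} (x : Z -> A) (i : Z) (n : nat) : list A :=
  map (fun j => x (i + Z.of_nat j)) (seq 0 n).

Definition closed_set {A : Type} (X : (Z -> A) -> Prop) : Prop :=
  forall x, (forall k, exists y, X y /\ agree_on k x y) -> X x.

Definition shift_invariant {A : Type} (X : (Z -> A) -> Prop) : Prop :=
  forall x, X x <-> X (shift x).

Definition shift_space {A : Type} (X : (Z -> A) -> Prop) : Prop :=
  closed_set X /\ shift_invariant X.

Definition is_word {A : Type} (X : (Z -> A) -> Prop) (u : list A) : Prop :=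
  exists x i, X x /\ block x i (length u) = u.

Definition occurs_in {A : Type} (u : list A) (x : Z -> A) : Prop :=
  exists i, block x i (length u) = u.

Definition SFT {A : Type} (X : (Z -> A) -> Prop) : Prop :=
  exists F : list (list A),
    forall x, X x <-> (forall u, In u F -> ~ occurs_in u x).

Definition irreducible {A : Type} (X : (Z -> A) -> Prop) : Prop :=
  forall u v, is_word X u -> is_word X v -> exists w, is_word X (u ++ w ++ v).

Definition nonwandering {A : Type} (X : (Z -> A) -> Prop) : Prop :=
  forall u, is_word X u -> exists w, is_word X (u ++ w ++ u).

Definition rel_open {A : Type} (X U : (Z -> A) -> Prop) : Prop :=
  (forall x, U x -> X x) /\
  forall x, U x -> exists k, forall y, X y -> agree_on k x y -> U y.

Definition code {A B : Type} (S : (Z -> A) -> Prop) (Y : (Z -> B) -> Prop)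
  (phi : (Z -> A) -> (Z -> B)) : Prop :=
  (forall x, S x -> Y (phi x)) /\
  (forall x k, S x -> exists m, forall y, S y -> agree_on m x y ->
       agree_on k (phi x) (phi y)) /\
  (forall x, S x -> phi (shift x) = shift (phi x)).

Definition open_code {A B : Type} (S : (Z -> A) -> Prop) (Y : (Z -> B) -> Prop)
  (phi : (Z -> A) -> (Z -> B)) : Prop :=
  forall U, rel_open S U ->
    rel_open Y (fun y => exists x, U x /\ phi x = y).

Definition left_asymptotic {A : Type} (x x' : Z -> A) : Prop :=
  forall k, exists N : nat, forall n : nat, (N <= n)%nat ->
    agree_on k (fun i => x (i - Z.of_nat n)) (fun i => x' (i - Z.of_nat n)).

Definition right_closing {A B : Type} (S : (Z -> A) -> Prop)
  (phi : (Z -> A) -> (Z -> B)) : Prop :=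
  forall x x', S x -> S x' -> left_asymptotic x x' -> phi x = phi x' -> x = x'.

(* A continuous code is a sliding block code, and compactness makes right closing and openness
   uniform: the letter at [1] is determined by the block on [[-N, 0]] together with the image on
   [[-N, N]], and an image block of radius [M] around [phi x] lifts to a preimage close to [x].
   Two points of [S] agreeing on a long enough stretch can therefore be spliced: glue their images
   inside the stretch (possible since [Y] is an SFT), lift the glued point near the left, and let
   right closing carry the agreement to the right; a shift space with such a splicing radius is an
   SFT.  For nonwandering, irreducibility and gluing give a point of [Y] carrying many equally
   spaced copies of the image of a window around a word [u]; lift every copy and choose, by the
   pigeonhole principle, two lifts with the same block on [[0, N]].  Having the same image, they
   agree on all of [[0, oo)], so one of them contains [u] twice. *)

From Pilot Require Import Defs.
From Stdlib Require Import ZArith List Lia Classical FunctionalExtensionality IndefiniteDescription.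
Import ListNotations.
Notation shift := Defs.shift.
Open Scope Z_scope.

Definition agree_between {A : Type} (a b : Z) (x y : Z -> A) : Prop :=
  forall i, a <= i <= b -> x i = y i.

Definition translate {A : Type} (n : Z) (x : Z -> A) : Z -> A := fun i => x (i + n).

Lemma agree_onE {A} k (x y : Z -> A) : agree_on k x y <-> agree_between (-k) k x y.
Proof. reflexivity. Qed.

Lemma agree_between_sub {A} a b a' b' (x y : Z -> A) :
  agree_between a b x y -> a <= a' -> b' <= b -> agree_between a' b' x y.
Proof. intros H ha hb i hi; apply H; lia. Qed.

Lemma agree_on_mono {A} k k' (x y : Z -> A) : agree_on k x y -> k' <= k -> agree_on k' x y.
Proof. intros H h i hi; apply H; lia. Qed.

Lemma agree_on_sym {A} k (x y : Z -> A) : agree_on k x y -> agree_on k y x.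
Proof. intros H i hi; symmetry; auto. Qed.

Lemma agree_on_trans {A} k (x y z : Z -> A) :
  agree_on k x y -> agree_on k y z -> agree_on k x z.
Proof. intros H1 H2 i hi; rewrite H1; auto. Qed.

Lemma translate_translate {A} n m (x : Z -> A) : translate n (translate m x) = translate (n + m) x.
Proof. apply functional_extensionality; intro i; unfold translate; f_equal; lia. Qed.

Lemma translate_0 {A} (x : Z -> A) : translate 0 x = x.
Proof. apply functional_extensionality; intro i; unfold translate; f_equal; lia. Qed.

Lemma translate_succ {A} n (x : Z -> A) : translate (Z.succ n) x = shift (translate n x).
Proof. apply functional_extensionality; intro i; unfold shift, translate; f_equal; lia. Qed.

Lemma translateK {A} n (x : Z -> A) : translate (- n) (translate n x) = x.
Proof. rewrite translate_translate, Z.add_opp_diag_l; apply translate_0. Qed.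

Lemma shift_inj {A} (x y : Z -> A) : shift x = shift y -> x = y.
Proof.
  intros e; apply functional_extensionality; intro i.
  replace i with (i - 1 + 1) by lia; exact (f_equal (fun f => f (i - 1)) e).
Qed.

Lemma agree_between_translate {A} n a b (x y : Z -> A) :
  agree_between (a + n) (b + n) x y <-> agree_between a b (translate n x) (translate n y).
Proof.
  unfold agree_between, translate; split; intros H i hi.
  - apply H; lia.
  - replace i with (i - n + n) by lia; apply H; lia.
Qed.

Lemma shift_space_translate {A} (X : (Z -> A) -> Prop) :
  shift_space X -> forall n x, X x -> X (translate n x).
Proof.
  intros [_ HX].
  enough (H : forall n x, X (translate n x) <-> X x) by (intros n x; apply H).
  intros n; pattern n; apply Z.bi_induction.
  - intros k k' ->; reflexivity.
  - intros x; rewrite translate_0; reflexivity.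
  - intros k; split; intros H x; rewrite <- (H x), translate_succ; [symmetry|]; apply HX.
Qed.

Section Code.
Context {A B : Type} (X : (Z -> A) -> Prop) (Y : (Z -> B) -> Prop) (phi : (Z -> A) -> Z -> B).
Hypotheses (hX : shift_space X) (hphi : code X Y phi).

Lemma code_translate n x : X x -> phi (translate n x) = translate n (phi x).
Proof.
  revert x; pattern n; apply Z.bi_induction.
  - intros k k' ->; reflexivity.
  - intros x _; rewrite !translate_0; reflexivity.
  - destruct hphi as [_ [_ Hshift]].
    intros k; split; intros H x hx.
    + rewrite (translate_succ k x), (translate_succ k (phi x)), Hshift
        by (apply shift_space_translate; auto).
      f_equal; auto.
    + apply shift_inj; rewrite <- Hshift by (apply shift_space_translate; auto).
      rewrite <- (translate_succ k x), <- (translate_succ k (phi x)); auto.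
Qed.

End Code.

Lemma block_length {A} (x : Z -> A) i n : length (block x i n) = n.
Proof. unfold block; rewrite length_map, length_seq; auto. Qed.

Lemma block_nth {A} (x : Z -> A) i n t d :
  (t < n)%nat -> nth t (block x i n) d = x (i + Z.of_nat t).
Proof.
  intros h; unfold block.
  rewrite (nth_indep _ d (x (i + Z.of_nat 0))) by (rewrite length_map, length_seq; auto).
  rewrite (map_nth (fun j => x (i + Z.of_nat j))), seq_nth; auto.
Qed.

Lemma block_ext {A} (x y : Z -> A) i j n :
  (forall t, (t < n)%nat -> x (i + Z.of_nat t) = y (j + Z.of_nat t)) ->
  block x i n = block y j n.
Proof. intros H; apply map_ext_in; intros t ht; apply in_seq in ht; apply H; lia. Qed.

Lemma block_inj {A} (x y : Z -> A) i j n : block x i n = block y j n ->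
  forall t, (t < n)%nat -> x (i + Z.of_nat t) = y (j + Z.of_nat t).
Proof.
  intros H t ht; rewrite <- (block_nth x i n t (x 0)), <- (block_nth y j n t (x 0)) by auto.
  congruence.
Qed.

Lemma block_agree_between {A} (x y : Z -> A) i j n : block x i n = block y j n ->
  agree_between i (i + Z.of_nat n - 1) x (translate (j - i) y).
Proof.
  intros H p hp; unfold translate.
  replace p with (i + Z.of_nat (Z.to_nat (p - i))) by lia.
  rewrite (block_inj _ _ _ _ _ H) by lia; f_equal; lia.
Qed.

Lemma map_seq_offset {T} (f : nat -> T) a b :
  map f (seq a b) = map (fun j => f (a + j)%nat) (seq 0 b).
Proof.
  revert a f; induction b as [|b IH]; intros a f; simpl; auto.
  rewrite Nat.add_0_r, IH, (IH 1%nat); f_equal; apply map_ext; intros; f_equal; lia.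
Qed.

Lemma block_app {A} (x : Z -> A) i a b :
  block x i (a + b) = block x i a ++ block x (i + Z.of_nat a) b.
Proof.
  unfold block; rewrite seq_app, map_app, (map_seq_offset _ (0 + a)); f_equal.
  apply map_ext; intros; f_equal; lia.
Qed.

Lemma block_translate {A} (x : Z -> A) n i k : block (translate n x) i k = block x (i + n) k.
Proof. apply block_ext; intros; unfold translate; f_equal; lia. Qed.

Lemma app_inj_length {T} (l1 l2 l1' l2' : list T) :
  length l1 = length l1' -> l1 ++ l2 = l1' ++ l2' -> l1 = l1' /\ l2 = l2'.
Proof.
  revert l1'; induction l1 as [|a l1 IH]; intros [|a' l1'] hl e; simpl in *; try lia; auto.
  injection e as -> e; destruct (IH l1' ltac:(lia) e) as [-> ->]; auto.
Qed.

Lemma block_app_inv {A} (x : Z -> A) i u v : block x i (length (u ++ v)) = u ++ v ->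
  block x i (length u) = u /\ block x (i + Z.of_nat (length u)) (length v) = v.
Proof. rewrite length_app, block_app; apply app_inj_length; apply block_length. Qed.

Definition infinitely_often (P : nat -> Prop) : Prop := forall M, exists m, (M <= m)%nat /\ P m.

Lemma infinitely_often_mono (P Q : nat -> Prop) :
  infinitely_often P -> (forall m, P m -> Q m) -> infinitely_often Q.
Proof. intros H h M; destruct (H M) as [m [hm pm]]; exists m; auto. Qed.

Lemma infinitely_often_pigeonhole {T} (l : list T) (P : nat -> Prop) (Q : T -> nat -> Prop) :
  infinitely_often P -> (forall m, P m -> exists t, In t l /\ Q t m) ->
  exists t, In t l /\ infinitely_often (Q t).
Proof.
  revert P; induction l as [|t l IH]; intros P HP H.
  - destruct (HP 0%nat) as [m [_ hm]]; destruct (H m hm) as [t [[] _]].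
  - destruct (classic (infinitely_often (Q t))) as [h|h]; [exists t; simpl; auto|].
    apply not_all_ex_not in h; destruct h as [M0 h].
    destruct (IH (fun m => P m /\ (M0 <= m)%nat)) as [t' [ht' hq]].
    + intros M; destruct (HP (Nat.max M M0)) as [m [hm pm]]; exists m; split; [|split]; auto; lia.
    + intros m [pm hm]; destruct (H m pm) as [t'' [[<-|i] q]]; eauto.
      exfalso; apply h; exists m; auto.
    + exists t'; simpl; auto.
Qed.

Definition cluster_point {C : Type} (s : nat -> Z -> C) (c : Z -> C) : Prop :=
  forall k M, exists m, (M <= m)%nat /\ agree_on k (s m) c.

Lemma coherent_patterns_limit {C} (p : nat -> Z -> C) :
  (forall k, agree_on (Z.of_nat k - 1) (p (S k)) (p k)) ->
  exists c, forall k, agree_on (Z.of_nat k - 1) (p k) c.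
Proof.
  intros Hp; exists (fun i => p (S (Z.to_nat (Z.abs i))) i); intros k i hi.
  set (k0 := S (Z.to_nat (Z.abs i))).
  assert (H : forall d, p (k0 + d)%nat i = p k0 i).
  { induction d as [|d IH]; [rewrite Nat.add_0_r; auto|].
    rewrite Nat.add_succ_r, Hp; auto; lia. }
  replace k with (k0 + (k - k0))%nat by lia; apply H.
Qed.

Section Compactness.
Context {C : Type} (s : nat -> Z -> C).
Hypothesis hC : finite_alphabet C.

(* Radius [k - 1], so that stage [0] imposes no condition. *)
Definition frequently_near (k : nat) (p : Z -> C) : Prop :=
  infinitely_often (fun m => agree_on (Z.of_nat k - 1) (s m) p).

Lemma frequently_near_extend k p : frequently_near k p ->
  exists p', frequently_near (S k) p' /\ agree_on (Z.of_nat k - 1) p' p.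
Proof.
  intros H; destruct hC as [lC hlC].
  destruct (infinitely_often_pigeonhole (list_prod lC lC) _
    (fun ab m => agree_on (Z.of_nat k - 1) (s m) p /\
       s m (- Z.of_nat k) = fst ab /\ s m (Z.of_nat k) = snd ab) H) as [[a b] [_ Hab]].
  { intros m hm; exists (s m (- Z.of_nat k), s m (Z.of_nat k)); split; [apply in_prod|]; auto. }
  exists (fun i => if Z.eq_dec i (- Z.of_nat k) then a
           else if Z.eq_dec i (Z.of_nat k) then b else p i); split.
  - apply (infinitely_often_mono _ _ Hab); intros m [hp [ha hb]] i hi; simpl in ha, hb.
    destruct (Z.eq_dec i (- Z.of_nat k)); [subst; auto|].
    destruct (Z.eq_dec i (Z.of_nat k)); [subst; auto|].
    apply hp; lia.
  - intros i hi; destruct (Z.eq_dec i (- Z.of_nat k)); [lia|].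
    destruct (Z.eq_dec i (Z.of_nat k)); [lia|auto].
Qed.

Lemma exists_cluster_point : exists c, cluster_point s c.
Proof.
  destruct (functional_choice (fun (kp : nat * (Z -> C)) p' =>
      frequently_near (fst kp) (snd kp) ->
      frequently_near (S (fst kp)) p' /\ agree_on (Z.of_nat (fst kp) - 1) p' (snd kp)))
    as [F HF].
  { intros [k p]; destruct (classic (frequently_near k p)) as [h|h].
    - destruct (frequently_near_extend k p h) as [p' hp']; exists p'; auto.
    - exists p; intro; contradiction. }
  set (pats := fix pats (k : nat) : Z -> C :=
         match k with O => s 0%nat | S k => F (k, pats k) end).
  assert (Hnear : forall k, frequently_near k (pats k)).
  { induction k as [|k IH].
    - intros M; exists M; split; auto; intros i hi; simpl in hi; lia.
    - apply (HF (k, pats k)); auto. }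
  destruct (coherent_patterns_limit pats) as [c Hc].
  { intros k; apply (HF (k, pats k)); auto. }
  exists c; intros k M.
  destruct (Hnear (S (Z.to_nat k)) M) as [m [hm ha]]; exists m; split; auto.
  apply agree_on_mono with (Z.of_nat (S (Z.to_nat k)) - 1); [|lia].
  eapply agree_on_trans; eauto.
Qed.

End Compactness.

Lemma closed_cluster_point {A} (X : (Z -> A) -> Prop) (s : nat -> Z -> A) c :
  closed_set X -> (forall m, X (s m)) -> cluster_point s c -> X c.
Proof.
  intros HX Hs Hc; apply HX; intros k; destruct (Hc k 0%nat) as [m [_ h]].
  exists (s m); split; auto; apply agree_on_sym; auto.
Qed.

Lemma finite_alphabet_prod {A C} :
  finite_alphabet A -> finite_alphabet C -> finite_alphabet (A * C).
Proof. intros [lA hA] [lC hC]; exists (list_prod lA lC); intros [a c]; apply in_prod; auto. Qed.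

Lemma exists_cluster_pair {A C} (s1 : nat -> Z -> A) (s2 : nat -> Z -> C) :
  finite_alphabet A -> finite_alphabet C ->
  exists c1 c2, forall k M, exists m, (M <= m)%nat /\ agree_on k (s1 m) c1 /\ agree_on k (s2 m) c2.
Proof.
  intros hA hC.
  destruct (exists_cluster_point (fun m i => (s1 m i, s2 m i)) (finite_alphabet_prod hA hC))
    as [c Hc].
  exists (fun i => fst (c i)), (fun i => snd (c i)); intros k M.
  destruct (Hc k M) as [m [hm ha]]; exists m; split; auto.
  split; intros i hi; rewrite <- (ha i hi); auto.
Qed.

Lemma left_asymptotic_of_agree_left {A} (x x' : Z -> A) :
  (forall i, i <= 0 -> x i = x' i) -> left_asymptotic x x'.
Proof. intros H k; exists (Z.to_nat k); intros n hn i hi; apply H; lia. Qed.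

Section Uniformity.
Context {A B : Type} (X : (Z -> A) -> Prop) (Y : (Z -> B) -> Prop) (phi : (Z -> A) -> Z -> B).
Hypotheses (hA : finite_alphabet A) (hX : shift_space X) (hphi : code X Y phi).

Definition window_radius (m : Z) : Prop :=
  forall x y, X x -> X y -> agree_on m x y -> phi x 0 = phi y 0.

Definition right_closing_radius (N : Z) : Prop :=
  forall x x', X x -> X x' -> agree_between (-N) 0 x x' ->
    agree_between (-N) N (phi x) (phi x') -> x 1 = x' 1.

Definition lifting_radius (k M : Z) : Prop :=
  forall x y, X x -> Y y -> agree_on M (phi x) y ->
    exists x', X x' /\ phi x' = y /\ agree_on k x x'.

Lemma code_window_radius : exists m, 0 <= m /\ window_radius m.
Proof.
  apply NNPP; intro H.
  assert (Hbad : forall n : nat, exists xy : (Z -> A) * (Z -> A), X (fst xy) /\ X (snd xy) /\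
      agree_on (Z.of_nat n) (fst xy) (snd xy) /\ phi (fst xy) 0 <> phi (snd xy) 0).
  { intros n; apply NNPP; intro h; apply H; exists (Z.of_nat n); split; [lia|].
    intros x y hx hy ha; apply NNPP; intro hne; apply h; exists (x, y); auto. }
  destruct (functional_choice _ Hbad) as [f hf].
  destruct (exists_cluster_point (fun n => fst (f n)) hA) as [c hc].
  assert (Xc : X c)
    by (apply (closed_cluster_point X (fun n => fst (f n))); [apply hX|intro; apply hf|exact hc]).
  destruct hphi as [_ [hcont _]]; destruct (hcont c 0 Xc) as [m0 hm0].
  destruct (hc m0 (Z.to_nat m0)) as [m [hm ha]].
  destruct (hf m) as [h1 [h2 [h3 hne]]]; apply hne.
  assert (hc2 : agree_on m0 c (snd (f m))).
  { apply agree_on_trans with (fst (f m)); [apply agree_on_sym; auto|].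
    apply agree_on_mono with (Z.of_nat m); auto; lia. }
  rewrite <- (hm0 _ h1 (agree_on_sym _ _ _ ha) 0) by lia; apply (hm0 _ h2 hc2); lia.
Qed.

Lemma window_radius_at m : window_radius m ->
  forall x y p, X x -> X y -> agree_between (p - m) (p + m) x y -> phi x p = phi y p.
Proof.
  intros H x y p hx hy ha.
  assert (e := H (translate p x) (translate p y)
    (shift_space_translate _ hX p x hx) (shift_space_translate _ hX p y hy)).
  rewrite !(code_translate X Y phi hX hphi) in e by auto.
  apply e, agree_onE, agree_between_translate; eapply agree_between_sub; eauto; lia.
Qed.

Lemma right_closing_has_radius : right_closing X phi -> exists N, 0 <= N /\ right_closing_radius N.
Proof.
  intros hrc; destruct code_window_radius as [m1 [hm1 Hm1]].
  apply NNPP; intro H.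
  assert (Hbad : forall n : nat, exists xy : (Z -> A) * (Z -> A), X (fst xy) /\ X (snd xy) /\
      agree_between (- Z.of_nat n) 0 (fst xy) (snd xy) /\
      agree_between (- Z.of_nat n) (Z.of_nat n) (phi (fst xy)) (phi (snd xy)) /\
      fst xy 1 <> snd xy 1).
  { intros n; apply NNPP; intro h; apply H; exists (Z.of_nat n); split; [lia|].
    intros x y hx hy ha hb; apply NNPP; intro hne; apply h; exists (x, y); auto. }
  destruct (functional_choice _ Hbad) as [f hf].
  destruct (exists_cluster_pair (fun n => fst (f n)) (fun n => snd (f n)) hA hA) as [x [x' hc]].
  assert (Xx : X x).
  { apply (closed_cluster_point X (fun n => fst (f n))); [apply hX|intro; apply hf|].
    intros k M; destruct (hc k M) as [m [? [? ?]]]; eauto. }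
  assert (Xx' : X x').
  { apply (closed_cluster_point X (fun n => snd (f n))); [apply hX|intro; apply hf|].
    intros k M; destruct (hc k M) as [m [? [? ?]]]; eauto. }
  assert (Hleft : forall i, i <= 0 -> x i = x' i).
  { intros i hi; destruct (hc (- i) (Z.to_nat (- i))) as [m [hm [h1 h2]]].
    rewrite <- h1, <- h2 by lia; apply hf; lia. }
  assert (Hphi : phi x = phi x').
  { apply functional_extensionality; intro i.
    destruct (hc (Z.abs i + m1) (Z.to_nat (Z.abs i))) as [m [hm [h1 h2]]].
    destruct (hf m) as [f1 [f2 [_ [f4 _]]]].
    rewrite <- (window_radius_at m1 Hm1 (fst (f m)) x i f1 Xx),
            <- (window_radius_at m1 Hm1 (snd (f m)) x' i f2 Xx').
    - apply f4; lia.
    - intros j hj; apply h2; lia.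
    - intros j hj; apply h1; lia. }
  assert (e := hrc x x' Xx Xx' (left_asymptotic_of_agree_left x x' Hleft) Hphi).
  destruct (hc 1 0%nat) as [m [_ [h1 h2]]].
  apply (proj2 (proj2 (proj2 (proj2 (hf m))))).
  rewrite (h1 1), (h2 1), e by lia; reflexivity.
Qed.

Lemma open_code_has_lifting_radius : open_code X Y phi ->
  forall k, exists M, 0 <= M /\ lifting_radius k M.
Proof.
  intros hop k; destruct code_window_radius as [m1 [hm1 Hm1]].
  apply NNPP; intro H.
  assert (Hbad : forall n : nat, exists xy : (Z -> A) * (Z -> B), X (fst xy) /\ Y (snd xy) /\
      agree_on (Z.of_nat n) (phi (fst xy)) (snd xy) /\
      ~ (exists x', X x' /\ phi x' = snd xy /\ agree_on k (fst xy) x')).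
  { intros n; apply NNPP; intro h; apply H; exists (Z.of_nat n); split; [lia|].
    intros x y hx hy ha; apply NNPP; intro hne; apply h; exists (x, y); auto. }
  destruct (functional_choice _ Hbad) as [f hf].
  destruct (exists_cluster_point (fun n => fst (f n)) hA) as [c hc].
  assert (Xc : X c)
    by (apply (closed_cluster_point X (fun n => fst (f n))); [apply hX|intro; apply hf|exact hc]).
  destruct (hop (fun z => X z /\ agree_on k c z)) as [_ Hopen].
  { split; [intros z [? ?]; auto|].
    intros z [hz hcz]; exists k; intros y hy hzy; split; auto; eapply agree_on_trans; eauto. }
  destruct (Hopen (phi c)) as [m0 hm0].
  { exists c; split; auto; split; auto; intros i hi; auto. }
  destruct (hc (Z.abs k + Z.abs m0 + m1) (Z.to_nat (Z.abs m0))) as [m [hm ha]].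
  destruct (hf m) as [h1 [h2 [h3 hne]]]; apply hne.
  destruct (hm0 (snd (f m)) h2) as [z [[hz hcz] hzy]].
  { intros i hi; rewrite <- (h3 i) by lia.
    apply (window_radius_at m1 Hm1); auto; intros j hj; symmetry; apply ha; lia. }
  exists z; split; auto; split; auto.
  intros i hi; rewrite (ha i) by lia; apply hcz; auto.
Qed.

End Uniformity.

Lemma lifting_radius_mono {A B} X Y (phi : (Z -> A) -> Z -> B) k M M' :
  lifting_radius X Y phi k M -> M <= M' -> lifting_radius X Y phi k M'.
Proof. intros H hM x y hx hy ha; apply H; auto; eapply agree_on_mono; eauto. Qed.

Lemma block_translate_agree {A} (x z : Z -> A) c (l : nat) :
  agree_between (c - Z.of_nat l) (c + Z.of_nat l) (translate (- c) z) x ->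
  block x c l = block z 0 l.
Proof.
  intros H; apply block_ext; intros t ht; rewrite <- H by lia; unfold translate; f_equal; lia.
Qed.

Section Propagation.
Context {A B : Type} (X : (Z -> A) -> Prop) (Y : (Z -> B) -> Prop) (phi : (Z -> A) -> Z -> B).
Hypotheses (hX : shift_space X) (hY : shift_space Y) (hphi : code X Y phi).

Lemma lifting_radius_at k M : lifting_radius X Y phi k M ->
  forall x y c, X x -> Y y -> agree_between (c - M) (c + M) (phi x) y ->
  exists x', X x' /\ phi x' = y /\ agree_between (c - k) (c + k) x x'.
Proof.
  intros HM x y c hx hy ha.
  destruct (HM (translate c x) (translate c y)) as [x' [hx' [e ha']]].
  - apply shift_space_translate; auto.
  - apply shift_space_translate; auto.
  - rewrite (code_translate X Y phi hX hphi) by auto.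
    apply agree_onE, agree_between_translate; eapply agree_between_sub; eauto; lia.
  - exists (translate (- c) x'); split; [|split].
    + apply shift_space_translate; auto.
    + rewrite (code_translate X Y phi hX hphi), e by auto; apply translateK.
    + intros i hi; unfold translate; rewrite <- ha' by lia; unfold translate; f_equal; lia.
Qed.

Lemma lifting_radius_block (l : nat) M z y c : lifting_radius X Y phi (Z.of_nat l) M ->
  X z -> Y y -> (forall p, -M <= p <= M -> y (c + p) = phi z p) ->
  exists x, X x /\ phi x = y /\ block x c l = block z 0 l.
Proof.
  intros HM hz hy Hy.
  destruct (lifting_radius_at _ _ HM (translate (- c) z) y c) as [x [hx [e ha]]]; auto.
  - apply shift_space_translate; auto.
  - rewrite (code_translate X Y phi hX hphi) by auto; intros p hp; unfold translate.
    rewrite <- (Hy (p + - c)) by lia; f_equal; lia.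
  - exists x; split; [|split]; auto; apply block_translate_agree; exact ha.
Qed.

Variable N : Z.
Hypothesis HN : right_closing_radius X phi N.

Lemma right_closing_radius_at x x' p : X x -> X x' -> agree_between (p - N) p x x' ->
  agree_between (p - N) (p + N) (phi x) (phi x') -> x (p + 1) = x' (p + 1).
Proof.
  intros hx hx' h1 h2.
  assert (e := HN (translate p x) (translate p x')
    (shift_space_translate _ hX p x hx) (shift_space_translate _ hX p x' hx')).
  rewrite !(code_translate X Y phi hX hphi) in e by auto; unfold translate in e.
  rewrite Z.add_comm; apply e; apply agree_between_translate;
    eapply agree_between_sub; eauto; lia.
Qed.

Lemma right_closing_propagate a b x x' : X x -> X x' -> agree_between a (a + N) x x' ->
  agree_between a b (phi x) (phi x') -> agree_between a (b - N + 1) x x'.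
Proof.
  intros hx hx' h1 h2.
  assert (H : forall t : nat, a + N + Z.of_nat t <= b - N + 1 ->
            agree_between a (a + N + Z.of_nat t) x x').
  { induction t as [|t IH]; intros ht; [eapply agree_between_sub; eauto; lia|].
    assert (IH' := IH ltac:(lia)).
    intros i hi; destruct (Z.eq_dec i (a + N + Z.of_nat (S t))) as [->|ne]; [|apply IH'; lia].
    replace (a + N + Z.of_nat (S t)) with (a + N + Z.of_nat t + 1) by lia.
    apply right_closing_radius_at; auto;
      [apply (agree_between_sub _ _ _ _ _ _ IH') | apply (agree_between_sub _ _ _ _ _ _ h2)]; lia. }
  destruct (Z_le_gt_dec (b - N + 1) (a + N)).
  - eapply agree_between_sub; eauto; lia.
  - intros i hi; apply (H (Z.to_nat (b - N + 1 - a - N))); lia.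
Qed.

Lemma right_closing_same_image a b x x' : X x -> X x' -> phi x = phi x' ->
  agree_between a (a + N) x x' -> agree_between a b x x'.
Proof.
  intros hx hx' e h; apply (agree_between_sub a (b + N - 1 - N + 1) a b); [|lia|lia].
  apply right_closing_propagate with (b := b + N - 1); auto; rewrite e; intros i hi; auto.
Qed.

End Propagation.

Definition glue {B : Type} (g : Z) (y1 y2 : Z -> B) : Z -> B :=
  fun p => if p <=? g then y1 p else y2 p.

Definition gluing_radius {B : Type} (Y : (Z -> B) -> Prop) (K : Z) : Prop :=
  forall g y1 y2, Y y1 -> Y y2 -> agree_between (g - K) g y1 y2 -> Y (glue g y1 y2).

Lemma list_length_bound {T} (F : list (list T)) :
  exists K, 0 <= K /\ forall u, In u F -> Z.of_nat (length u) <= K.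
Proof.
  induction F as [|v F [K [hK IH]]]; [exists 0; split; [lia|intros u []]|].
  exists (Z.max K (Z.of_nat (length v))); split; [lia|].
  intros u [<-|i]; [|specialize (IH u i)]; lia.
Qed.

(* A forbidden word of length at most [K] cannot straddle [g] if [y1] and [y2] agree on
   [[g - K, g]]. *)
Lemma SFT_gluing_radius {B} (Y : (Z -> B) -> Prop) : SFT Y -> exists K, 0 <= K /\ gluing_radius Y K.
Proof.
  intros [F HY]; destruct (list_length_bound F) as [K [hK HK]]; exists K; split; auto.
  intros g y1 y2 h1 h2 ha; apply HY; intros u hu [p hp]; specialize (HK u hu).
  destruct (Z_le_gt_dec (p + Z.of_nat (length u)) (g + 1)).
  - apply (proj1 (HY y1) h1 u hu); exists p; rewrite <- hp at 2; apply block_ext.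
    intros t ht; unfold glue; destruct (Z.leb_spec (p + Z.of_nat t) g); auto; lia.
  - apply (proj1 (HY y2) h2 u hu); exists p; rewrite <- hp at 2; apply block_ext.
    intros t ht; unfold glue; destruct (Z.leb_spec (p + Z.of_nat t) g); auto.
    symmetry; apply ha; lia.
Qed.

Definition splicing_radius {A : Type} (X : (Z -> A) -> Prop) (C : Z) : Prop :=
  forall z w s i b, X z -> X w -> agree_between s (s + C) z w -> i <= s ->
    exists z', X z' /\ agree_between i s z' z /\ agree_between s b z' w.

Section Splice.
Context {A B : Type} (X : (Z -> A) -> Prop) (Y : (Z -> B) -> Prop) (phi : (Z -> A) -> Z -> B).
Hypotheses (hX : shift_space X) (hY : shift_space Y) (hphi : code X Y phi).
Variables m N M K : Z.
Hypotheses (hm : 0 <= m) (hN : 0 <= N) (hM : 0 <= M) (hK : 0 <= K).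
Hypotheses (Hm : window_radius X phi m) (HN : right_closing_radius X phi N)
  (HM : lifting_radius X Y phi N M) (HK : gluing_radius Y K).

Lemma splicing_radius_of_code : splicing_radius X (2 * m + 2 * N + K + M).
Proof.
  intros z w s i b hz hw hzw hi.
  set (g := s + 2 * m + 2 * N + K + M - m).
  assert (Hphi : agree_between (s + m) g (phi z) (phi w)).
  { intros p hp; apply (window_radius_at X Y phi hX hphi m Hm); auto.
    eapply agree_between_sub; eauto; unfold g in hp; lia. }
  set (y := glue g (phi z) (phi w)).
  assert (hy : Y y).
  { apply HK; [apply hphi; auto|apply hphi; auto|]; eapply agree_between_sub; eauto; lia. }
  destruct (lifting_radius_at X Y phi hX hY hphi N M HM z y i) as [z' [hz' [e hzz']]]; auto.
  { intros p hp; unfold y, glue; destruct (Z.leb_spec p g); auto; lia. }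
  assert (Hz : agree_between i (g - N + 1) z' z).
  { apply (right_closing_propagate X Y phi hX hphi N HN i g); auto.
    - intros p hp; symmetry; apply hzz'; lia.
    - rewrite e; intros p hp; unfold y, glue; destruct (Z.leb_spec p g); auto; lia. }
  assert (Hw : agree_between (s + m) (b + N - 1 - N + 1) z' w).
  { apply (right_closing_propagate X Y phi hX hphi N HN); auto.
    - intros p hp; rewrite Hz by (unfold g; lia); apply hzw; lia.
    - rewrite e; intros p hp; unfold y, glue; destruct (Z.leb_spec p g); auto.
      apply Hphi; lia. }
  exists z'; split; [|split]; auto.
  - eapply agree_between_sub; eauto; unfold g; lia.
  - intros p hp; destruct (Z_le_gt_dec p (s + m)).
    + rewrite Hz by (unfold g; lia); apply hzw; lia.
    + apply Hw; lia.
Qed.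

End Splice.

Fixpoint words {T : Type} (l : list T) (n : nat) : list (list T) :=
  match n with
  | O => [[]]
  | S n => flat_map (fun a => map (cons a) (words l n)) l
  end.

Lemma words_complete {T} (l : list T) : (forall a, In a l) -> forall u, In u (words l (length u)).
Proof.
  intros hl u; induction u as [|a u IH]; simpl; auto.
  apply in_flat_map; exists a; split; auto; apply in_map; auto.
Qed.

Lemma exists_filter {T} (P : T -> Prop) (l : list T) :
  exists F, forall u, In u F <-> In u l /\ ~ P u.
Proof.
  induction l as [|t l [F HF]]; [exists []; simpl; tauto|].
  destruct (classic (P t)) as [h|h]; [exists F|exists (t :: F)]; intros u; simpl; rewrite HF;
    split; intuition (subst; tauto).
Qed.

Section SpliceSFT.
Context {A : Type} (X : (Z -> A) -> Prop) (C : Z).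
Hypotheses (hA : finite_alphabet A) (hX : shift_space X) (hC : 0 <= C) (HC : splicing_radius X C).

Lemma splice_extend_window x :
  (forall i, exists z, X z /\ agree_between i (i + C + 1) z x) ->
  forall (n : nat) i, exists z, X z /\ agree_between i (i + Z.of_nat n) z x.
Proof.
  intros Hblock n; induction n as [|n IH]; intros i;
    [|destruct (Z_le_gt_dec (Z.of_nat (S n)) (C + 1))];
    try (destruct (Hblock i) as [z [hz ha]]; exists z; split; auto;
         eapply agree_between_sub; eauto; lia).
  destruct (IH i) as [z [hz hzx]]; destruct (Hblock (i + Z.of_nat n - C)) as [w [hw hwx]].
  destruct (HC z w (i + Z.of_nat n - C) i (i + Z.of_nat (S n))) as [z' [hz' [h1 h2]]];
    auto; try lia.
  - intros p hp; rewrite hzx, hwx by lia; reflexivity.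
  - exists z'; split; auto; intros p hp; destruct (Z_le_gt_dec p (i + Z.of_nat n - C)).
    + rewrite h1 by lia; apply hzx; lia.
    + rewrite h2 by lia; apply hwx; lia.
Qed.

(* The forbidden words are the non-words of length [C + 2]. *)
Lemma splicing_radius_SFT : SFT X.
Proof.
  destruct hA as [lA hlA]; set (L := Z.to_nat (C + 2)).
  destruct (exists_filter (is_word X) (words lA L)) as [F HF]; exists F; intros x; split.
  { intros hx u hu [i hi]; apply HF in hu; apply (proj2 hu); exists x, i; auto. }
  intros Hx.
  assert (Hblock : forall i, exists z, X z /\ agree_between i (i + C + 1) z x).
  { intros i.
    assert (hw : is_word X (block x i L)).
    { apply NNPP; intro h; apply (Hx (block x i L)); [apply HF; split; auto|exists i; auto].
      - rewrite <- (block_length x i L) at 2; apply words_complete; auto.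
      - rewrite block_length; auto. }
    destruct hw as [z [j [hz hb]]]; rewrite block_length in hb.
    exists (translate (j - i) z); split; [apply shift_space_translate; auto|].
    intros p hp; symmetry; apply (block_agree_between x z i j L); [auto|unfold L; lia]. }
  apply (proj1 hX); intros k; destruct (Z_le_gt_dec 0 k).
  - destruct (splice_extend_window x Hblock (Z.to_nat (2 * k)) (- k)) as [z [hz ha]].
    exists z; split; auto; intros i hi; symmetry; apply ha; lia.
  - destruct (Hblock 0) as [z [hz _]]; exists z; split; auto; intros i hi; lia.
Qed.

End SpliceSFT.

Lemma pigeonhole {T} (f : nat -> T) (W : list T) :
  (forall j, (j <= length W)%nat -> In (f j) W) ->
  exists j j', (j < j' <= length W)%nat /\ f j = f j'.
Proof.
  intros H; apply NNPP; intro hn.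
  assert (nd : NoDup (map f (seq 0 (S (length W))))).
  { apply NoDup_map_NoDup_ForallPairs; [|apply seq_NoDup].
    intros a b ha hb e; apply in_seq in ha, hb.
    destruct (Nat.lt_trichotomy a b) as [h|[h|h]]; auto; exfalso; apply hn.
    - exists a, b; split; auto; lia.
    - exists b, a; split; auto; lia. }
  assert (hi : incl (map f (seq 0 (S (length W)))) W).
  { intros t ht; apply in_map_iff in ht; destruct ht as [j [<- hj]]; apply in_seq in hj.
    apply H; lia. }
  assert (hl := NoDup_incl_length nd hi); rewrite length_map, length_seq in hl; lia.
Qed.

Section Repetition.
Context {B : Type} (Y : (Z -> B) -> Prop) (K : Z).
Hypotheses (hY : shift_space Y) (hK : 0 <= K) (HK : gluing_radius Y K).

Lemma irreducible_return y M : irreducible Y -> Y y -> 0 <= M ->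
  exists T y1, 2 * M + 1 <= T /\ Y y1 /\
    forall p, -M <= p <= M -> y1 p = y p /\ y1 (T + p) = y p.
Proof.
  intros hirr hy hM; set (q := block y (- M) (Z.to_nat (2 * M + 1))).
  assert (hq : is_word Y q) by (exists y, (- M); unfold q; rewrite block_length; auto).
  destruct (hirr q q hq hq) as [w [y0 [j [hy0 hb]]]].
  apply block_app_inv in hb; destruct hb as [hb1 hb]; apply block_app_inv in hb.
  destruct hb as [_ hb2].
  assert (hlq : length q = Z.to_nat (2 * M + 1)) by apply block_length.
  assert (Hq : forall c, block y0 c (length q) = q ->
             forall p, -M <= p <= M -> y0 (c + M + p) = y p).
  { intros c hc p hp; rewrite hlq in hc.
    replace (c + M + p) with (c + Z.of_nat (Z.to_nat (p + M))) by lia.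
    rewrite (block_inj _ _ _ _ _ hc) by lia; f_equal; lia. }
  exists (Z.of_nat (length q + length w)), (translate (j + M) y0); repeat split.
  - rewrite hlq; lia.
  - apply shift_space_translate; auto.
  - unfold translate; rewrite <- (Hq j hb1 p) by auto; f_equal; lia.
  - unfold translate; rewrite <- (Hq _ hb2 p) by auto; f_equal; lia.
Qed.

Lemma glue_repeats v M T y1 : K <= M -> 2 * M + 1 <= T -> Y y1 ->
  (forall p, -M <= p <= M -> y1 p = v p /\ y1 (T + p) = v p) ->
  forall R : nat, exists y, Y y /\
    forall j : nat, (j <= R)%nat -> forall p, -M <= p <= M -> y (Z.of_nat j * T + p) = v p.
Proof.
  intros hKM hT hy1 H1; induction R as [|R [y [hy Hy]]].
  { exists y1; split; auto; intros j hj p hp; replace j with 0%nat by lia; apply H1; auto. }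
  set (g := Z.of_nat R * T); set (y2 := translate (- g) y1).
  assert (H2 : forall p, -M <= p <= M -> y2 (g + p) = v p /\ y2 (g + T + p) = v p).
  { intros p hp; unfold y2, translate.
    replace (g + p + - g) with p by lia; replace (g + T + p + - g) with (T + p) by lia; auto. }
  exists (glue g y y2); split.
  - apply HK; auto; [apply shift_space_translate; auto|].
    intros p hp; replace p with (g + (p - g)) by lia.
    rewrite (proj1 (H2 (p - g) ltac:(lia))); apply Hy; lia.
  - intros j hj p hp; unfold glue; destruct (Z.leb_spec (Z.of_nat j * T + p) g).
    + apply Hy; auto; destruct (Nat.eq_dec j (S R)); [subst j; unfold g in *; nia|lia].
    + assert (j = R \/ j = S R) as [->| ->] by (unfold g in *; nia).
      * apply H2; auto.
      * replace (Z.of_nat (S R) * T + p) with (g + T + p) by (unfold g; lia); apply H2; auto.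
Qed.

Lemma irreducible_repeats y M : irreducible Y -> Y y -> K <= M ->
  exists T, 2 * M + 1 <= T /\ forall R : nat, exists y', Y y' /\
    forall j : nat, (j <= R)%nat -> forall p, -M <= p <= M -> y' (Z.of_nat j * T + p) = y p.
Proof.
  intros hirr hy hKM.
  destruct (irreducible_return y M hirr hy ltac:(lia)) as [T [y1 [hT [hy1 H1]]]].
  exists T; split; auto; apply (glue_repeats y M T y1); auto.
Qed.

End Repetition.

Section Nonwandering.
Context {A B : Type} (X : (Z -> A) -> Prop) (Y : (Z -> B) -> Prop) (phi : (Z -> A) -> Z -> B).
Hypotheses (hA : finite_alphabet A) (hX : shift_space X) (hY : shift_space Y)
  (hphi : code X Y phi) (hirr : irreducible Y).
Variables N K : Z.
Hypotheses (HN : right_closing_radius X phi N) (hK : 0 <= K) (HK : gluing_radius Y K)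
  (Hlift : forall k, exists M, 0 <= M /\ lifting_radius X Y phi k M).

Lemma nonwandering_of_radii : nonwandering X.
Proof.
  intros u [z0 [j0 [hz0 hu]]]; set (l := length u); set (z := translate j0 z0).
  assert (hz : X z) by (apply shift_space_translate; auto).
  assert (bz : block z 0 l = u) by (unfold z; rewrite block_translate; auto).
  destruct (Hlift (Z.of_nat l)) as [M0 [hM0 HM0]]; set (M := M0 + K + Z.of_nat l).
  assert (HM : lifting_radius X Y phi (Z.of_nat l) M)
    by (apply (lifting_radius_mono X Y phi _ M0); [exact HM0|unfold M; lia]).
  destruct hA as [lA hlA]; set (Nn := Z.to_nat (N + 1)); set (R := length (words lA Nn)).
  destruct (irreducible_repeats Y K hY hK HK (phi z) M hirr (proj1 hphi z hz) ltac:(unfold M; lia))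
    as [T [hT Hrep]]; destruct (Hrep R) as [ys [hys Hys]].
  assert (Hlifts : forall j : nat, exists zj, (j <= R)%nat -> X zj /\ phi zj = ys /\
            block zj (Z.of_nat j * T) l = u).
  { intros j; destruct (Nat.le_gt_cases j R) as [hj|hj]; [|exists z; lia].
    rewrite <- bz; destruct (lifting_radius_block X Y phi hX hY hphi l M z ys (Z.of_nat j * T))
      as [zj hzj]; eauto. }
  destruct (functional_choice _ Hlifts) as [Zf HZf].
  destruct (pigeonhole (fun j => block (Zf j) 0 Nn) (words lA Nn)) as [j [j' [hjj' he]]].
  { intros j _; rewrite <- (block_length (Zf j) 0 Nn) at 2; apply words_complete; auto. }
  destruct (HZf j ltac:(unfold R; lia)) as [hj [ej uj]].
  destruct (HZf j' ltac:(lia)) as [hj' [ej' uj']].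
  assert (Hagree : agree_between 0 (Z.of_nat j' * T + Z.of_nat l) (Zf j) (Zf j')).
  { apply (right_closing_same_image X Y phi hX hphi N HN); auto; [congruence|].
    intros i hi; replace i with (0 + Z.of_nat (Z.to_nat i)) by lia.
    apply (block_inj _ _ _ _ _ he); unfold Nn; lia. }
  set (D := Z.to_nat (Z.of_nat j' * T - Z.of_nat j * T - Z.of_nat l)).
  exists (block (Zf j) (Z.of_nat j * T + Z.of_nat l) D), (Zf j), (Z.of_nat j * T); split; auto.
  rewrite !length_app, block_length, !block_app; fold l; rewrite uj; f_equal; f_equal.
  rewrite <- uj'; apply block_ext; intros t ht; rewrite Hagree by (unfold D; nia).
  f_equal; unfold D; nia.
Qed.

End Nonwandering.

Theorem proposition3p4 (A B : Type) (hA : finite_alphabet A) (hB : finite_alphabet B)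
  (S : (Z -> A) -> Prop) (Y : (Z -> B) -> Prop) (phi : (Z -> A) -> (Z -> B)) :
  shift_space S -> shift_space Y -> SFT Y -> irreducible Y ->
  code S Y phi -> right_closing S phi -> open_code S Y phi ->
  SFT S /\ nonwandering S.
Proof.
  intros hS hY hYSFT hirr hphi hrc hop.
  destruct (code_window_radius S Y phi hA hS hphi) as [m [hm Hm]].
  destruct (right_closing_has_radius S Y phi hA hS hphi hrc) as [N [hN HN]].
  destruct (open_code_has_lifting_radius S Y phi hA hS hphi hop N) as [M [hM HM]].
  destruct (SFT_gluing_radius Y hYSFT) as [K [hK HK]].
  split.
  - apply (splicing_radius_SFT S (2 * m + 2 * N + K + M) hA hS); [lia|].
    exact (splicing_radius_of_code S Y phi hS hY hphi m N M K hm hN hM hK Hm HN HM HK).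
  - exact (nonwandering_of_radii S Y phi hA hS hY hphi hirr N K HN hK HK
      (open_code_has_lifting_radius S Y phi hA hS hphi hop)).
Qed.
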